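(* Let $R$ be an integral domain with a language $\mathcal{L}$ which is the language of rings $\{0,1,+,\cdot\}$ possibly with extra constants and relations, and suppose Hilbert's tenth problem over $(R,\mathcal{L})$ has a positive answer. Let $K$ be the fraction field of $R$, $\overline K$ its algebraic closure, and let $\alpha\in\overline K$ be integral over $R$ with minimal equation having coefficients in $R_0=S_c'(\mathcal{L})$. Let $\mathcal{L}_\alpha=\mathcal{L}\cup\{c_\alpha,\mathrm{In}R\}$ with $c_\alpha$ a constant and $\mathrm{In}R$ a unary relation, interpreted on $R[\alpha]$ by: $+,\cdot$ the usual operations; each constant $c$ of $\mathcal{L}$ as in $R$; each relation $S$ of $\mathcal{L}$ as the same set as in $R$; $c_\alpha$ as $\alpha$; and $\mathrm{In}R(x)$ iff $x\in R$. Then Hilbert's tenth problem over $(R[\alpha],\mathcal{L}_\alpha)$ has a positive answer.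
   Context: For a set $R$ with language $\mathcal{L}$ (constants, functions, relations incl. $0$ and $=$), a basic formula has the form $(t_1,\dots,t_m)\in S$ with $S$ a relation of $\mathcal{L}$ or equality and $t_j$ terms built from constants and variables via the functions; $S\subset R^k$ is Diophantine if $S=\{\vec x\mid\exists\vec y\ (f_1\wedge\dots\wedge f_r)\}$ for basic formulas $f_i$. $S_c'(\mathcal{L})=\{x\in R\mid\{x\}\text{ is Diophantine}\}$. Hilbert's tenth problem has a positive answer over $(R,\mathcal{L})$ if there is an algorithm that decides, for any finite conjunction of basic formulas with coefficients from $S_c'(\mathcal{L})$ (given via a recursive ring of such coefficients), whether it has a solution in $R$. *)

From HB Require Import structures.
From mathcomp Require Import all_boot all_algebra.
From Stdlib Require List.
Set Implicit Arguments. Unset Strict Implicit. Unset Printing Implicit Defensive.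
Import GRing.Theory.

Inductive recf : Type :=
| RZero
| RSucc
| RProj (i : nat)             (* i-th projection (0 if out of range) *)
| RComp (f : recf) (gs : seq recf)
| RPrec (f g : recf)
| RMin (f : recf).

Inductive evalr : recf -> seq nat -> nat -> Prop :=
| ev_Z xs : evalr RZero xs 0
| ev_S x xs : evalr RSucc (x :: xs) x.+1
| ev_P i xs : evalr (RProj i) xs (nth 0 xs i)
| ev_C f gs xs ys y :
    List.Forall2 (fun g y => evalr g xs y) gs ys -> evalr f ys y ->
    evalr (RComp f gs) xs y
| ev_R0 f g xs y : evalr f xs y -> evalr (RPrec f g) (0 :: xs) y
| ev_RS f g n xs r y :
    evalr (RPrec f g) (n :: xs) r -> evalr g (n :: r :: xs) y ->
    evalr (RPrec f g) (n.+1 :: xs) y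
| ev_M f xs n :
    evalr f (n :: xs) 0 ->
    (forall m, m < n -> exists k, evalr f (m :: xs) k.+1) ->
    evalr (RMin f) xs n.

(* Syntax: the language of rings {0,1,+,*} plus extra constant symbols *)
(* (indexed by nat) and extra relation symbols (indexed by nat).       *)
Inductive term : Type :=
| TVar (n : nat)
| TZero
| TOne
| TCst (i : nat)
| TAdd (s t : term)
| TMul (s t : term).

Inductive basic : Type :=
| BEq (s t : term)
| BRel (i : nat) (ts : seq term).

(* a finite conjunction of basic formulas (all variables existentially
   quantified when asking for solvability) *)
Definition conj_formula := seq basic.

(* Goedel coding of formulas into nat (Cantor pairing). *)
Definition npair (a b : nat) : nat := (a + b) * (a + b).+1 %/ 2 + b.

Fixpoint enc_term (t : term) : nat :=
  match t with
  | TVar n => npair 0 n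
  | TZero => npair 1 0
  | TOne => npair 2 0
  | TCst i => npair 3 i
  | TAdd s u => npair 4 (npair (enc_term s) (enc_term u))
  | TMul s u => npair 5 (npair (enc_term s) (enc_term u))
  end.

Fixpoint enc_terms (ts : seq term) : nat :=
  match ts with
  | [::] => 0
  | t :: ts' => (npair (enc_term t) (enc_terms ts')).+1
  end.

Definition enc_basic (b : basic) : nat :=
  match b with
  | BEq s t => npair 0 (npair (enc_term s) (enc_term t))
  | BRel i ts => npair 1 (npair i (enc_terms ts))
  end.

Fixpoint enc_conj (phi : conj_formula) : nat :=
  match phi with
  | [::] => 0
  | b :: phi' => (npair (enc_basic b) (enc_conj phi')).+1
  end.

(* Semantics: a structure for this language, with a domain predicate   *)
(* (so that a subring of an ambient type can be used as carrier).      *)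
Record Struc := {
  car : Type;
  sdom : car -> Prop;
  szero : car;
  sone : car;
  sadd : car -> car -> car;
  smul : car -> car -> car;
  scst : nat -> car;
  srel : nat -> seq car -> Prop
}.

Fixpoint teval (S : Struc) (v : nat -> car S) (t : term) : car S :=
  match t with
  | TVar n => v n
  | TZero => @szero S
  | TOne => @sone S
  | TCst i => @scst S i
  | TAdd s u => sadd (teval v s) (teval v u)
  | TMul s u => smul (teval v s) (teval v u)
  end.

Definition bholds (S : Struc) (v : nat -> car S) (b : basic) : Prop :=
  match b with
  | BEq s t => teval v s = teval v t
  | BRel i ts => @srel S i (map (teval v) ts)
  end.

Definition holds (S : Struc) (v : nat -> car S) (phi : conj_formula) : Prop :=
  forall b, List.In b phi -> bholds v b.

Definition solvable (S : Struc) (phi : conj_formula) : Prop :=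
  exists v : nat -> car S, (forall n, @sdom S (v n)) /\ holds v phi.

(* S'_c(L): elements x such that {x} is Diophantine (variable 0 is the
   free variable x, all other variables are existentially quantified). *)
Definition diophantine_singleton (S : Struc) (x : car S) : Prop :=
  exists phi : conj_formula,
    forall z, @sdom S z ->
      ((exists v : nat -> car S,
          (forall n, @sdom S (v n)) /\ v 0%N = z /\ holds v phi) <-> z = x).

Definition H10_positive (S : Struc) : Prop :=
  exists f : recf, forall phi : conj_formula,
    (solvable S phi -> evalr f [:: enc_conj phi] 1) /\
    (~ solvable S phi -> evalr f [:: enc_conj phi] 0).

Local Open Scope ring_scope.

Definition StrucR (R : idomainType) (cst : nat -> R) (rel : nat -> seq R -> Prop)
  : Struc :=
  {| car := R; sdom := fun _ => True; szero := 0%R; sone := 1%R;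
     sadd := +%R; smul := *%R; scst := cst; srel := rel |}.

(* R[alpha] inside an ambient field F containing R via iota *)
Definition inRalpha (R : idomainType) (F : fieldType) (iota : {rmorphism R -> F})
  (alpha : F) (x : F) : Prop :=
  exists q : {poly R}, x = (map_poly iota q).[alpha].

(* L_alpha = L u {c_alpha, InR}: extra constant 0 is c_alpha, extra constant
   n+1 is the constant n of L; extra relation 0 is InR, extra relation n+1 is
   the relation n of L (interpreted as the same subset as in R). *)
Definition alpha_cst (R : idomainType) (F : fieldType) (iota : {rmorphism R -> F})
  (alpha : F) (cst : nat -> R) (i : nat) : F :=
  match i with 0 => alpha | n.+1 => iota (cst n) end.

Definition alpha_rel (R : idomainType) (F : fieldType) (iota : {rmorphism R -> F})
  (rel : nat -> seq R -> Prop) (i : nat) (s : seq F) : Prop :=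
  match i with
  | 0 => exists r : R, s = [:: iota r]
  | n.+1 => exists s0 : seq R, rel n s0 /\ s = map iota s0
  end.

Definition StrucRalpha (R : idomainType) (F : fieldType) (iota : {rmorphism R -> F})
  (alpha : F) (cst : nat -> R) (rel : nat -> seq R -> Prop) : Struc :=
  {| car := F; sdom := inRalpha iota alpha; szero := 0%R; sone := 1%R;
     sadd := +%R; smul := *%R; scst := alpha_cst iota alpha cst;
     srel := alpha_rel iota rel |}.

(** A root [alpha] of a monic polynomial [p] of degree [d] that is minimal
    over [R] makes [R[alpha]] a free [R]-module with basis
    [1, alpha, ..., alpha^(d-1)]: every element has unique coordinates in [R],
    sums are coordinatewise, and products are computed from the coordinates of
    the powers [alpha^m], which are polynomials in the coefficients of [p].
    Since these coefficients are Diophantine singletons, a system over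
    [R[alpha]] translates into a system over [R] that has a solution exactly
    when the original one does: each subterm is replaced by [d] coordinate
    variables, [InR] says that the higher coordinates vanish, and a relation of
    [L] is applied to the 0-th coordinates.  The translation is primitive
    recursive on Goedel codes, so composing it with a decision procedure for
    [R] decides solvability over [R[alpha]]. *)

From mathcomp Require Import all_boot all_algebra zify.
From Stdlib Require List.
From Stdlib Require Import ClassicalEpsilon.
Import GRing.Theory.

Set Implicit Arguments. Unset Strict Implicit. Unset Printing Implicit Defensive.

(** * Total mu-recursive functions *)

Definition computable (k : nat) (f : seq nat -> nat) :=
  exists r : recf, forall xs, size xs = k -> evalr r xs (f xs).

Definition computable1 (f : nat -> nat) :=
  computable 1 (fun xs => f (nth 0 xs 0)).
Definition computable2 (f : nat -> nat -> nat) :=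
  computable 2 (fun xs => f (nth 0 xs 0) (nth 0 xs 1)).
Definition computable3 (f : nat -> nat -> nat -> nat) :=
  computable 3 (fun xs => f (nth 0 xs 0) (nth 0 xs 1) (nth 0 xs 2)).

Lemma computable_ext k f g :
  (forall xs, size xs = k -> f xs = g xs) -> computable k f -> computable k g.
Proof. by move=> efg [r hr]; exists r => xs hs; rewrite -efg //; apply: hr. Qed.

Fixpoint const_recf (c : nat) : recf :=
  if c is c'.+1 then RComp RSucc [:: const_recf c'] else RZero.

Lemma evalr_const_recf c xs : evalr (const_recf c) xs c.
Proof.
elim: c => [|c IHc] /=; first exact: ev_Z.
by apply: (@ev_C _ _ _ [:: c]); [constructor | exact: ev_S].
Qed.

Lemma computable_const k c : computable k (fun _ => c).
Proof. by exists (const_recf c) => xs _; apply: evalr_const_recf. Qed.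

Lemma computable_nth k i : computable k (fun xs => nth 0 xs i).
Proof. by exists (RProj i) => xs _; apply: ev_P. Qed.

Lemma computable_succ k f : computable k f -> computable k (fun xs => (f xs).+1).
Proof.
move=> [r hr]; exists (RComp RSucc [:: r]) => xs hs.
by apply: (@ev_C _ _ _ [:: f xs]); [constructor; [exact: hr | constructor] | exact: ev_S].
Qed.

Lemma computable_comp k m g (fs : seq (seq nat -> nat)) :
  size fs = m -> computable m g -> (forall f, List.In f fs -> computable k f) ->
  computable k (fun xs => g (map (fun f => f xs) fs)).
Proof.
move=> size_fs [rg hg] hfs.
have [rs hrs] : exists rs, forall xs, size xs = k ->
    List.Forall2 (fun r y => evalr r xs y) rs (map (fun f => f xs) fs).
  elim: fs {size_fs} hfs => [|f fs IHfs] hfs; first by exists [::] => xs _; constructor.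
  have [r hr] := hfs f (or_introl erefl).
  have [rs hrs] := IHfs (fun f' h => hfs f' (or_intror h)).
  by exists (r :: rs) => xs hs; constructor; [exact: hr | exact: hrs].
exists (RComp rg rs) => xs hs; apply: ev_C; first exact: hrs.
by apply: hg; rewrite size_map.
Qed.

Lemma computable_comp1 k f a :
  computable1 f -> computable k a -> computable k (fun xs => f (a xs)).
Proof. by move=> hf ha; have := @computable_comp k 1 _ [:: a] erefl hf; apply=> _ [<-|[]]. Qed.

Lemma computable_comp2 k f a b : computable2 f -> computable k a -> computable k b ->
  computable k (fun xs => f (a xs) (b xs)).
Proof.
by move=> hf ha hb; have := @computable_comp k 2 _ [:: a; b] erefl hf; apply=> _ [<-|[<-|[]]].
Qed.

Lemma computable_comp3 k f a b c : computable3 f ->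
  computable k a -> computable k b -> computable k c ->
  computable k (fun xs => f (a xs) (b xs) (c xs)).
Proof.
move=> hf ha hb hc.
by have := @computable_comp k 3 _ [:: a; b; c] erefl hf; apply=> _ [<-|[<-|[<-|[]]]].
Qed.

Fixpoint prim_rec (g h : seq nat -> nat) (n : nat) (ys : seq nat) : nat :=
  if n is m.+1 then h (m :: prim_rec g h m ys :: ys) else g ys.

Lemma computable_prim_rec k g h : computable k g -> computable k.+2 h ->
  computable k.+1 (fun xs => prim_rec g h (nth 0 xs 0) (behead xs)).
Proof.
move=> [rg hg] [rh hh].
exists (RComp (RPrec rg rh) (map RProj (iota 0 k.+1))) => xs hs.
apply: (@ev_C _ _ _ xs).
  have {2}-> : xs = map (nth 0 xs) (iota 0 k.+1).
    apply: (@eq_from_nth _ 0); first by rewrite size_map size_iota.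
    by move=> i hi; rewrite (nth_map 0) ?size_iota -?hs // nth_iota // -hs.
  by elim: (iota 0 k.+1) => [|a l IHl] /=; constructor; [exact: ev_P | exact: IHl].
case: xs hs => [|n ys] //= [hs].
elim: n => [|n IHn] /=; first by apply: ev_R0; apply: hg.
by apply: ev_RS; [exact: IHn | apply: hh => /=; rewrite hs].
Qed.

Lemma computable1_rec (f : nat -> nat) c h :
  computable2 h -> f 0 = c -> (forall m, f m.+1 = h m (f m)) -> computable1 f.
Proof.
move=> hh f0 fS.
have := @computable_prim_rec 0 (fun _ => c) (fun ys => h (nth 0 ys 0) (nth 0 ys 1))
  (computable_const _ _) hh.
apply: computable_ext => -[|n []] //= _.
by elim: n => [|n IHn] /=; rewrite ?f0 // IHn fS.
Qed.

Lemma computable2_rec (f : nat -> nat -> nat) g h :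
  computable1 g -> computable3 h ->
  (forall y, f 0 y = g y) -> (forall m y, f m.+1 y = h m (f m y) y) -> computable2 f.
Proof.
move=> hg hh f0 fS.
have := @computable_prim_rec 1 (fun ys => g (nth 0 ys 0))
  (fun ys => h (nth 0 ys 0) (nth 0 ys 1) (nth 0 ys 2)) hg hh.
apply: computable_ext => -[|n [|y []]] //= _.
by elim: n => [|n IHn] /=; rewrite ?f0 // IHn fS.
Qed.

Lemma predn_computable : computable1 predn.
Proof. by apply: (@computable1_rec _ 0 (fun m _ => m)) => //; apply: computable_nth. Qed.

Lemma addn_computable : computable2 addn.
Proof.
apply: (@computable2_rec _ id (fun _ r _ => r.+1)) => //; first exact: computable_nth.
exact: computable_succ (computable_nth _ 1).
Qed.

Lemma subn_computable : computable2 subn.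
Proof.
have hsub : computable2 (fun y x => x - y).
  apply: (@computable2_rec _ id (fun _ r _ => r.-1)) => [|||m y]; last exact: subnS.
  - exact: computable_nth.
  - exact: computable_comp1 predn_computable (computable_nth _ 1).
  - exact: subn0.
exact: computable_comp2 hsub (computable_nth _ 1) (computable_nth _ 0).
Qed.

Lemma muln_computable : computable2 muln.
Proof.
apply: (@computable2_rec _ (fun _ => 0) (fun _ r y => r + y)) => [||//|m y].
- exact: computable_const.
- exact: computable_comp2 addn_computable (computable_nth _ 1) (computable_nth _ 2).
- by rewrite mulSn addnC.
Qed.

Lemma ifz_computable : computable3 (fun x a b => if x == 0 then a else b).
Proof.
have := @computable_prim_rec 2 (fun ys => nth 0 ys 0) (fun ys => nth 0 ys 3)
  (computable_nth _ _) (computable_nth _ _).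
by apply: computable_ext => -[|[|x] [|a [|b []]]].
Qed.

Lemma computable_pred k f : computable k f -> computable k (fun xs => (f xs).-1).
Proof. exact: computable_comp1 predn_computable. Qed.

Lemma computableD k f g :
  computable k f -> computable k g -> computable k (fun xs => f xs + g xs).
Proof. exact: computable_comp2 addn_computable. Qed.

Lemma computableB k f g :
  computable k f -> computable k g -> computable k (fun xs => f xs - g xs).
Proof. exact: computable_comp2 subn_computable. Qed.

Lemma computableM k f g :
  computable k f -> computable k g -> computable k (fun xs => f xs * g xs).
Proof. exact: computable_comp2 muln_computable. Qed.

Lemma computable_if k (b : seq nat -> bool) f g :
  computable k (fun xs => b xs) -> computable k f -> computable k g ->
  computable k (fun xs => if b xs then f xs else g xs).
Proof.
move=> hb hf hg; have := computable_comp3 ifz_computable hb hg hf.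
by apply: computable_ext => xs _; case: (b xs).
Qed.

Lemma computable_eqn k f g :
  computable k f -> computable k g -> computable k (fun xs => f xs == g xs).
Proof.
move=> hf hg; have := computable_comp3 ifz_computable
  (computableD (computableB hf hg) (computableB hg hf))
  (computable_const k 1) (computable_const k 0).
apply: computable_ext => xs _; have [->|ne] := eqVneq (f xs) (g xs).
  by rewrite subnn.
by case: eqP => //; lia.
Qed.

Lemma computable_leqn k f g :
  computable k f -> computable k g -> computable k (fun xs => f xs <= g xs).
Proof.
move=> hf hg; have := computable_comp3 ifz_computable (computableB hf hg)
  (computable_const k 1) (computable_const k 0).
by apply: computable_ext => xs _; rewrite subn_eq0; case: leqP.
Qed.

(** * Cantor pairing and codes of sequences *)

Fixpoint tri (m : nat) : nat := if m is m'.+1 then tri m' + m else 0.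

Lemma tri_double m : tri m * 2 = m * m.+1.
Proof. by elim: m => [|m IHm] //=; rewrite mulnDl IHm; lia. Qed.

Lemma npairE a b : npair a b = tri (a + b) + b.
Proof. by rewrite /npair -tri_double mulnK. Qed.

Lemma leq_tri m m' : m <= m' -> tri m <= tri m'.
Proof.
move=> le_mm'; rewrite -(subnK le_mm'); elim: (m' - m) => [|d IHd] //=.
exact: leq_trans IHd (leq_addr _ _).
Qed.

Lemma leq_tri_id m : m <= tri m.
Proof. by elim: m => [|m IHm] //=; lia. Qed.

Lemma tri_computable : computable1 tri.
Proof.
apply: (@computable1_rec _ 0 (fun m r => r + m.+1)) => //.
exact: computableD (computable_nth _ 1) (computable_succ (computable_nth _ 0)).
Qed.

Lemma npair_computable : computable2 npair.
Proof.
have := computableD (computable_comp1 tri_computable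
  (computableD (computable_nth 2 0) (computable_nth 2 1))) (computable_nth 2 1).
by apply: computable_ext => xs _; rewrite npairE.
Qed.

(* [tri_count m c] counts the [s] in [1..m] with [tri s <= c]; for [m = c] this
   is the diagonal [a + b] on which [c = npair a b] lies. *)
Fixpoint tri_count (m c : nat) : nat :=
  if m is m'.+1 then tri_count m' c + (tri m <= c) else 0.

Definition diag (c : nat) : nat := tri_count c c.
Definition unpair2 (c : nat) : nat := c - tri (diag c).
Definition unpair1 (c : nat) : nat := diag c - unpair2 c.

Lemma tri_countE m c s : tri s <= c < tri s.+1 -> tri_count m c = minn m s.
Proof.
move=> /andP[lo hi]; elim: m => [|m IHm] /=; first by rewrite min0n.
rewrite IHm; case: (ltnP m s) => hms.
  have -> : tri m.+1 <= c by apply: leq_trans lo; apply: leq_tri.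
  lia.
have /negbTE -> : ~~ (tri m.+1 <= c).
  by rewrite -ltnNge; apply: leq_trans hi _; apply: leq_tri.
lia.
Qed.

Lemma diagE c s : tri s <= c < tri s.+1 -> diag c = s.
Proof.
move=> hs; rewrite /diag (tri_countE _ hs).
have : s <= c by case/andP: hs => lo _; apply: leq_trans (leq_tri_id _) lo.
lia.
Qed.

Lemma tri_bracket c : exists s, tri s <= c < tri s.+1.
Proof.
elim: c => [|c [s /andP[lo hi]]]; first by exists 0.
case: (ltnP c.+1 (tri s.+1)) => hc; first by exists s; rewrite hc andbT; lia.
exists s.+1; apply/andP; split; first by [].
by move: hi => /=; lia.
Qed.

Lemma unpair_npair a b : unpair1 (npair a b) = a /\ unpair2 (npair a b) = b.
Proof.
have hdiag : diag (npair a b) = a + b by apply: diagE; rewrite npairE /=; lia.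
by rewrite /unpair1 /unpair2 hdiag npairE; lia.
Qed.

Lemma unpair1_npair a b : unpair1 (npair a b) = a.
Proof. by case: (unpair_npair a b). Qed.

Lemma unpair2_npair a b : unpair2 (npair a b) = b.
Proof. by case: (unpair_npair a b). Qed.

Lemma npair_unpair c : npair (unpair1 c) (unpair2 c) = c.
Proof.
have [s hs] := tri_bracket c; rewrite /unpair1 /unpair2 (diagE hs) npairE.
move: hs => /andP[lo /= hi].
have -> : s - (c - tri s) + (c - tri s) = s by lia.
lia.
Qed.

Lemma leq_npair a b : (a <= npair a b) && (b <= npair a b).
Proof. by rewrite npairE; have := leq_tri_id (a + b); lia. Qed.

Lemma ltn_npair a b : 0 < a -> b < npair a b.
Proof. by rewrite npairE => a_gt0; have := leq_tri_id (a + b); lia. Qed.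

Lemma leq_unpair1 c : unpair1 c <= c.
Proof. by rewrite -{2}(npair_unpair c); case/andP: (leq_npair (unpair1 c) (unpair2 c)). Qed.

Lemma leq_unpair2 c : unpair2 c <= c.
Proof. by rewrite -{2}(npair_unpair c); case/andP: (leq_npair (unpair1 c) (unpair2 c)). Qed.

Lemma diag_computable : computable1 diag.
Proof.
have hcount : computable2 tri_count.
  apply: (@computable2_rec _ (fun _ => 0) (fun m r c => r + (tri m.+1 <= c))) => //.
    exact: computable_const.
  apply: computableD (computable_nth _ 1) (computable_leqn _ (computable_nth _ 2)).
  exact: computable_comp1 tri_computable (computable_succ (computable_nth _ 0)).
exact: computable_comp2 hcount (computable_nth _ 0) (computable_nth _ 0).
Qed.

Lemma computable_npair k f g :
  computable k f -> computable k g -> computable k (fun xs => npair (f xs) (g xs)).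
Proof. exact: computable_comp2 npair_computable. Qed.

Lemma computable_unpair2 k f : computable k f -> computable k (fun xs => unpair2 (f xs)).
Proof.
move=> hf; apply: (computableB hf (computable_comp1 tri_computable _)).
exact: computable_comp1 diag_computable hf.
Qed.

Lemma computable_unpair1 k f : computable k f -> computable k (fun xs => unpair1 (f xs)).
Proof.
move=> hf; apply: (computableB _ (computable_unpair2 hf)).
exact: computable_comp1 diag_computable hf.
Qed.

(* Sequences are coded like [enc_conj]: [[::]] by [0], [x :: s] by
   [(npair x (code s)).+1]. *)
Definition lcons (x L : nat) : nat := (npair x L).+1.
Definition lhead (L : nat) : nat := unpair1 L.-1.
Definition ltail (L : nat) : nat := unpair2 L.-1.
Definition enc_seq (s : seq nat) : nat := foldr lcons 0 s.

Fixpoint dec_seq_fuel (fuel L : nat) : seq nat :=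
  match fuel, L with
  | fuel'.+1, L'.+1 => unpair1 L' :: dec_seq_fuel fuel' (unpair2 L')
  | _, _ => [::]
  end.

Definition dec_seq (L : nat) : seq nat := dec_seq_fuel L L.

Lemma lhead_lcons x L : lhead (lcons x L) = x.
Proof. exact: unpair1_npair. Qed.

Lemma ltail_lcons x L : ltail (lcons x L) = L.
Proof. exact: unpair2_npair. Qed.

Lemma dec_seq_fuel_enough fuel fuel' L :
  L <= fuel -> L <= fuel' -> dec_seq_fuel fuel L = dec_seq_fuel fuel' L.
Proof.
elim: fuel fuel' L => [|fuel IHfuel] [|fuel'] [|L] //= h h'.
by congr (_ :: _); apply: IHfuel; apply: leq_trans (leq_unpair2 _) _; lia.
Qed.

Lemma dec_seqE L :
  dec_seq L = if L is L'.+1 then unpair1 L' :: dec_seq (unpair2 L') else [::].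
Proof.
case: L => [|L] //=; congr (_ :: _).
by apply: dec_seq_fuel_enough => //; have := leq_unpair2 L; lia.
Qed.

Lemma enc_seqK : cancel enc_seq dec_seq.
Proof.
by elim=> [|x s IHs] //; rewrite dec_seqE /= /lcons unpair1_npair unpair2_npair IHs.
Qed.

Lemma dec_seqK : cancel dec_seq enc_seq.
Proof.
move=> L; elim: L {-2}L (leqnn L) => [|N IHN] [|L] // hL.
by rewrite dec_seqE /= /lcons IHN ?npair_unpair //; have := leq_unpair2 L; lia.
Qed.

Lemma size_dec_seq L : size (dec_seq L) <= L.
Proof.
elim: L {-2}L (leqnn L) => [|N IHN] [|L] // hL.
by rewrite dec_seqE /=; have := leq_unpair2 L; have := IHN (unpair2 L); lia.
Qed.

Lemma ltail_enc_seq s : ltail (enc_seq s) = enc_seq (behead s).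
Proof. by case: s => [|x s]; [exact: (unpair2_npair 0 0) | exact: ltail_lcons]. Qed.

Lemma ltn_enc_seq x s : List.In x s -> x < enc_seq s.
Proof.
elim: s => [|y s IHs] //= [<-|hx]; rewrite /lcons;
  case/andP: (leq_npair y (enc_seq s)) => h1 h2; last have := IHs hx; lia.
Qed.

Lemma computable_lhead k f : computable k f -> computable k (fun xs => lhead (f xs)).
Proof. by move=> hf; apply/computable_unpair1/computable_pred. Qed.

Lemma computable_ltail k f : computable k f -> computable k (fun xs => ltail (f xs)).
Proof. by move=> hf; apply/computable_unpair2/computable_pred. Qed.

Lemma computable_lcons k f g :
  computable k f -> computable k g -> computable k (fun xs => lcons (f xs) (g xs)).
Proof. by move=> hf hg; apply/computable_succ/computable_npair. Qed.

Lemma computable_iter_ltail k f g :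
  computable k f -> computable k g -> computable k (fun xs => iter (f xs) ltail (g xs)).
Proof.
move=> hf hg; have hiter : computable2 (fun i L => iter i ltail L).
  apply: (@computable2_rec _ id (fun _ r _ => ltail r)) => //.
    exact: computable_nth.
  exact: computable_ltail (computable_nth _ 1).
exact: computable_comp2 hiter hf hg.
Qed.

Lemma iter_ltailE i L : iter i ltail L = enc_seq (drop i (dec_seq L)).
Proof.
elim: i => [|i IHi]; first by rewrite drop0 dec_seqK.
by rewrite iterS IHi ltail_enc_seq !drop_behead.
Qed.

Section ComputableFoldr.
Variable h : nat -> nat -> nat.
Hypothesis h_computable : computable2 h.

(* Step [m] of the recursion consumes the element at position [L - m]. *)
Fixpoint foldr_code (m L a : nat) : nat :=
  if m is m'.+1 then
    let T := iter (L - m) ltail L in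
    if T == 0 then foldr_code m' L a else h (lhead T) (foldr_code m' L a)
  else a.

Lemma foldr_codeE m L a :
  m <= L -> foldr_code m L a = foldr h a (drop (L - m) (dec_seq L)).
Proof.
elim: m => [|m IHm] le_mL /=; first by rewrite subn0 drop_oversize // size_dec_seq.
rewrite IHm ?iter_ltailE; last lia.
have -> : drop (L - m) (dec_seq L) = behead (drop (L - m.+1) (dec_seq L)).
  by rewrite !drop_behead -iterS; congr iter; lia.
by case: (drop _ _) => [|x s] //=; rewrite lhead_lcons.
Qed.

Lemma computable_foldr k L a : computable k L -> computable k a ->
  computable k (fun xs => foldr h (a xs) (dec_seq (L xs))).
Proof.
move=> hL ha; have hloop : computable3 foldr_code.
  have hT : computable 4 (fun ys => iter (nth 0 ys 2 - (nth 0 ys 0).+1) ltail (nth 0 ys 2)).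
    apply: computable_iter_ltail (computable_nth _ 2).
    exact: computableB (computable_nth _ 2) (computable_succ (computable_nth _ 0)).
  have := computable_prim_rec (computable_nth 2 1)
    (computable_if (computable_eqn hT (computable_const _ 0)) (computable_nth _ 1)
      (computable_comp2 h_computable (computable_lhead hT) (computable_nth _ 1))).
  apply: computable_ext => -[|m [|L0 [|a0 []]]] //= _.
  by elim: m => [|m IHm] //=; rewrite IHm.
have := computable_comp3 hloop hL hL ha.
by apply: computable_ext => xs _; rewrite foldr_codeE // subnn drop0.
Qed.

End ComputableFoldr.

(** * Computable constructions of formula codes *)

Definition computable_term k (t : seq nat -> term) :=
  computable k (fun xs => enc_term (t xs)).

Definition computable_basic k (b : seq nat -> basic) :=
  computable k (fun xs => enc_basic (b xs)).

(* Prepending to an arbitrary computable tail makes concatenation compositional. *)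
Definition computable_prefix k (bs : seq nat -> seq basic) :=
  forall a, computable k a ->
  computable k (fun xs => foldr lcons (a xs) (map enc_basic (bs xs))).

Lemma computable_term_const k t : computable_term k (fun _ => t).
Proof. exact: computable_const. Qed.

Lemma computable_TVar k f : computable k f -> computable_term k (fun xs => TVar (f xs)).
Proof. exact: computable_npair (computable_const _ _). Qed.

Lemma computable_TCst k f : computable k f -> computable_term k (fun xs => TCst (f xs)).
Proof. exact: computable_npair (computable_const _ _). Qed.

Lemma computable_TAdd k s t : computable_term k s -> computable_term k t ->
  computable_term k (fun xs => TAdd (s xs) (t xs)).
Proof.
by move=> hs ht; apply: computable_npair (computable_const _ _) (computable_npair hs ht).
Qed.

Lemma computable_TMul k s t : computable_term k s -> computable_term k t ->
  computable_term k (fun xs => TMul (s xs) (t xs)).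
Proof.
by move=> hs ht; apply: computable_npair (computable_const _ _) (computable_npair hs ht).
Qed.

Lemma computable_term_foldr k (I : Type) (l : seq I) (F : I -> seq nat -> term -> term) t0 :
  (forall i t, computable_term k t -> computable_term k (fun xs => F i xs (t xs))) ->
  computable_term k t0 ->
  computable_term k (fun xs => foldr (fun i acc => F i xs acc) (t0 xs) l).
Proof. by move=> hF h0; elim: l => [|i l IHl] //=; apply: hF. Qed.

Lemma computable_BEq k s t : computable_term k s -> computable_term k t ->
  computable_basic k (fun xs => BEq (s xs) (t xs)).
Proof.
by move=> hs ht; apply: computable_npair (computable_const _ _) (computable_npair hs ht).
Qed.

Lemma enc_termsE ts : enc_terms ts = enc_seq (map enc_term ts).
Proof. by elim: ts => [|t ts IHts] //=; rewrite IHts. Qed.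

Lemma computable_BRel k i ts : computable k i ->
  computable k (fun xs => enc_seq (map enc_term (ts xs))) ->
  computable_basic k (fun xs => BRel (i xs) (ts xs)).
Proof.
move=> hi hts; have := computable_npair (computable_const k 1) (computable_npair hi hts).
by apply: computable_ext => xs _ /=; rewrite enc_termsE.
Qed.

Lemma computable_enc_seq_map k (g : nat -> term) L :
  computable1 (fun x => enc_term (g x)) -> computable k L ->
  computable k (fun xs => enc_seq (map enc_term (map g (dec_seq (L xs))))).
Proof.
move=> hg hL.
have hstep : computable2 (fun x acc => lcons (enc_term (g x)) acc).
  exact: computable_lcons (computable_comp1 hg (computable_nth _ 0)) (computable_nth _ 1).
have := computable_foldr hstep hL (computable_const k 0).
by apply: computable_ext => xs _; elim: (dec_seq (L xs)) => [|x l IHl] //=; rewrite IHl.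
Qed.

Lemma computable_prefix_nil k : computable_prefix k (fun _ => [::]).
Proof. by []. Qed.

Lemma computable_prefix_cons k b bs : computable_basic k b -> computable_prefix k bs ->
  computable_prefix k (fun xs => b xs :: bs xs).
Proof. by move=> hb hbs a ha /=; apply: computable_lcons hb (hbs a ha). Qed.

Lemma computable_prefix_map k (l : seq nat) (b : nat -> seq nat -> basic) :
  (forall j, computable_basic k (b j)) -> computable_prefix k (fun xs => [seq b j xs | j <- l]).
Proof.
move=> hb; elim: l => [|j l IHl]; first exact: computable_prefix_nil.
exact: computable_prefix_cons (hb j) IHl.
Qed.

Lemma computable_prefix_if k (c : seq nat -> bool) bs1 bs2 :
  computable k (fun xs => c xs) -> computable_prefix k bs1 -> computable_prefix k bs2 ->
  computable_prefix k (fun xs => if c xs then bs1 xs else bs2 xs).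
Proof.
move=> hc h1 h2 a ha; have := computable_if hc (h1 a ha) (h2 a ha).
by apply: computable_ext => xs _; case: (c xs).
Qed.

Lemma computable_prefix_flatten k (f : nat -> seq basic) L :
  computable_prefix 2 (fun ys => f (nth 0 ys 0)) -> computable k L ->
  computable_prefix k (fun xs => flatten (map f (dec_seq (L xs)))).
Proof.
move=> hf hL a ha.
have := computable_foldr (h := fun x acc => foldr lcons acc (map enc_basic (f x)))
  (hf _ (computable_nth _ 1)) hL ha.
apply: computable_ext => xs _; elim: (dec_seq (L xs)) => [|x l IHl] //=.
by rewrite map_cat foldr_cat IHl.
Qed.

Lemma H10_positive_reduction (S S' : Struc) (T : conj_formula -> conj_formula) :
  (exists r, forall phi, evalr r [:: enc_conj phi] (enc_conj (T phi))) ->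
  (forall phi, solvable S' phi <-> solvable S (T phi)) ->
  H10_positive S -> H10_positive S'.
Proof.
move=> [r hr] hT [f hf]; exists (RComp f [:: r]) => phi.
have hcomp y : evalr f [:: enc_conj (T phi)] y -> evalr (RComp f [:: r]) [:: enc_conj phi] y.
  move=> hy; apply: (@ev_C _ _ _ [:: enc_conj (T phi)]) => //.
  by constructor; [exact: hr | constructor].
have [hf1 hf2] := hf (T phi); rewrite hT.
by split=> h; apply: hcomp; [exact: hf1 | exact: hf2].
Qed.

(** * The translation into a system over [R] *)

Fixpoint rename_term (f : nat -> nat) (t : term) : term :=
  match t with
  | TVar m => TVar (f m)
  | TAdd s u => TAdd (rename_term f s) (rename_term f u)
  | TMul s u => TMul (rename_term f s) (rename_term f u)
  | _ => t
  end.

Definition rename_basic (f : nat -> nat) (b : basic) : basic :=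
  match b with
  | BEq s t => BEq (rename_term f s) (rename_term f t)
  | BRel i ts => BRel i (map (rename_term f) ts)
  end.

Section Translation.
Variable n : nat.

(* Variable layout of the translated system: the even variable
   [coord_var e j] holds the [j]-th coordinate of the term with code [e];
   [coef_var i] holds [- p_i] and [def_var i m] the [m]-th variable of the
   Diophantine definition of [p_i]. *)
Definition coord_var (e j : nat) : nat := 2 * (e * n + j).
Definition coef_var (i : nat) : nat := (2 * npair i 0).+1.
Definition def_var (i m : nat) : nat := (2 * npair i m.+1).+1.

(* The [j]-th coordinate of [alpha ^+ m], from [alpha ^+ n = - \sum_i p_i alpha ^+ i]. *)
Fixpoint pow_coord_term (m j : nat) : term :=
  if m is m'.+1 then
    TAdd (if j is j'.+1 then pow_coord_term m' j' else TZero)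
         (TMul (pow_coord_term m' n.-1) (TVar (coef_var j)))
  else if j == 0 then TOne else TZero.

Definition mul_coord_term (s u j : nat) : term :=
  foldr (fun a acc => foldr (fun b acc' =>
     TAdd (TMul (TMul (TVar (coord_var s a)) (TVar (coord_var u b))) (pow_coord_term (a + b) j))
       acc') acc (iota 0 n))
   TZero (iota 0 n).

Definition coord_eqs (e : nat) (f : nat -> term) : seq basic :=
  [seq BEq (TVar (coord_var e j)) (f j) | j <- iota 0 n].

(* [TCst 0] is [c_alpha]; codes of variables (tag 0) and non-codes get no
   equations. *)
Definition code_block (e : nat) : seq basic :=
  let tag := unpair1 e in let r := unpair2 e in
  let s := unpair1 r in let u := unpair2 r in
  if tag == 1 then coord_eqs e (fun _ => TZero)
  else if tag == 2 then coord_eqs e (pow_coord_term 0)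
  else if tag == 3 then
    (if r == 0 then coord_eqs e (pow_coord_term 1)
     else coord_eqs e (fun j => if j == 0 then TCst r.-1 else TZero))
  else if tag == 4 then coord_eqs e (fun j => TAdd (TVar (coord_var s j)) (TVar (coord_var u j)))
  else if tag == 5 then coord_eqs e (mul_coord_term s u)
  else [::].

Definition high_coords_zero (e : nat) : seq basic :=
  [seq BEq (TVar (coord_var e j)) TZero | j <- iota 1 n.-1].

(* [1 = 0] translates a malformed use of [InR]. *)
Definition atom_block (x : nat) : seq basic :=
  let tag := unpair1 x in let r := unpair2 x in
  if tag == 0 then
    [seq BEq (TVar (coord_var (unpair1 r) j)) (TVar (coord_var (unpair2 r) j)) | j <- iota 0 n]
  else if tag == 1 then
    let i := unpair1 r in let L := unpair2 r in
    if i == 0 then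
      (if (L != 0) && (ltail L == 0) then high_coords_zero (lhead L)
       else [:: BEq TOne TZero])
    else BRel i.-1 (map (fun t => TVar (coord_var t 0)) (dec_seq L))
         :: flatten (map high_coords_zero (dec_seq L))
  else [::].

Definition coef_def (phiD : nat -> conj_formula) (i : nat) : conj_formula :=
  BEq (TAdd (TVar (coef_var i)) (TVar (def_var i 0))) TZero
  :: map (rename_basic (def_var i)) (phiD i).

Definition coef_defs (phiD : nat -> conj_formula) : conj_formula :=
  flatten [seq coef_def phiD i | i <- iota 0 n].

Fixpoint blocks_below (defs : conj_formula) (c : nat) : conj_formula :=
  if c is e.+1 then code_block e ++ blocks_below defs e else defs.

Definition translate (defs phi : conj_formula) : conj_formula :=
  flatten [seq atom_block (enc_basic b) | b <- phi] ++ blocks_below defs (enc_conj phi).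

Lemma code_block_TZero : code_block (enc_term TZero) = coord_eqs (enc_term TZero) (fun _ => TZero).
Proof. by rewrite /code_block unpair1_npair. Qed.

Lemma code_block_TOne :
  code_block (enc_term TOne) = coord_eqs (enc_term TOne) (pow_coord_term 0).
Proof. by rewrite /code_block unpair1_npair. Qed.

Lemma code_block_alpha :
  code_block (enc_term (TCst 0)) = coord_eqs (enc_term (TCst 0)) (pow_coord_term 1).
Proof. by rewrite /code_block unpair1_npair unpair2_npair. Qed.

Lemma code_block_TCst i : code_block (enc_term (TCst i.+1)) =
  coord_eqs (enc_term (TCst i.+1)) (fun j => if j == 0 then TCst i else TZero).
Proof. by rewrite /code_block unpair1_npair unpair2_npair. Qed.

Lemma code_block_TAdd s u : code_block (enc_term (TAdd s u)) =
  coord_eqs (enc_term (TAdd s u))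
    (fun j => TAdd (TVar (coord_var (enc_term s) j)) (TVar (coord_var (enc_term u) j))).
Proof. by rewrite /code_block unpair1_npair !unpair2_npair unpair1_npair. Qed.

Lemma code_block_TMul s u : code_block (enc_term (TMul s u)) =
  coord_eqs (enc_term (TMul s u)) (mul_coord_term (enc_term s) (enc_term u)).
Proof. by rewrite /code_block unpair1_npair !unpair2_npair unpair1_npair. Qed.

Lemma atom_block_BEq s t : atom_block (enc_basic (BEq s t)) =
  [seq BEq (TVar (coord_var (enc_term s) j)) (TVar (coord_var (enc_term t) j)) | j <- iota 0 n].
Proof. by rewrite /atom_block unpair1_npair !unpair2_npair unpair1_npair. Qed.

Lemma atom_block_InR ts : atom_block (enc_basic (BRel 0 ts)) =
  if ts is [:: t] then high_coords_zero (enc_term t) else [:: BEq TOne TZero].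
Proof.
rewrite /atom_block unpair1_npair !unpair2_npair unpair1_npair /= enc_termsE.
by case: ts => [|t [|t' ts]] //=; rewrite ltail_lcons // lhead_lcons.
Qed.

Lemma atom_block_rel i ts : atom_block (enc_basic (BRel i.+1 ts)) =
  BRel i [seq TVar (coord_var (enc_term t) 0) | t <- ts]
  :: flatten [seq high_coords_zero (enc_term t) | t <- ts].
Proof.
rewrite /atom_block unpair1_npair !unpair2_npair unpair1_npair /= enc_termsE enc_seqK.
by rewrite -!map_comp.
Qed.

Fixpoint blocks_code (d c : nat) : nat :=
  if c is e.+1 then foldr lcons (blocks_code d e) (map enc_basic (code_block e)) else d.

Definition translation_code (d c : nat) : nat :=
  foldr (fun x acc => foldr lcons acc (map enc_basic (atom_block x))) (blocks_code d c) (dec_seq c).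

Lemma enc_conjE phi : enc_conj phi = enc_seq (map enc_basic phi).
Proof. by elim: phi => [|b phi IHphi] //=; rewrite IHphi. Qed.

Lemma foldr_lcons_enc_conj l phi :
  foldr lcons (enc_conj phi) (map enc_basic l) = enc_conj (l ++ phi).
Proof. by elim: l => [|b l IHl] //=; rewrite IHl. Qed.

Lemma translation_codeE defs phi :
  translation_code (enc_conj defs) (enc_conj phi) = enc_conj (translate defs phi).
Proof.
have hblocks c : blocks_code (enc_conj defs) c = enc_conj (blocks_below defs c).
  by elim: c => [|c IHc] //=; rewrite IHc foldr_lcons_enc_conj.
rewrite /translation_code hblocks /translate.
have -> : dec_seq (enc_conj phi) = map enc_basic phi by rewrite enc_conjE enc_seqK.
move: (blocks_below _ _) => B.
by elim: phi => [|b phi IHphi] //=; rewrite IHphi foldr_lcons_enc_conj catA.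
Qed.

Lemma computable_coord_var k e j : computable k e -> computable k (fun xs => coord_var (e xs) j).
Proof.
move=> he; apply: computableM (computable_const _ 2) _.
exact: computableD (computableM he (computable_const _ n)) (computable_const _ j).
Qed.

Lemma computable_coord_eqs k e (f : nat -> seq nat -> term) :
  computable k e -> (forall j, computable_term k (f j)) ->
  computable_prefix k (fun xs => coord_eqs (e xs) (fun j => f j xs)).
Proof.
move=> he hf; apply: computable_prefix_map => j; apply: computable_BEq (hf j).
exact: computable_TVar (computable_coord_var _ he).
Qed.

Lemma computable_code_block k e :
  computable k e -> computable_prefix k (fun xs => code_block (e xs)).
Proof.
move=> he; have htag := computable_unpair1 he; have hr := computable_unpair2 he.
have hs := computable_unpair1 hr; have hu := computable_unpair2 hr.
have htest c : computable k (fun xs => unpair1 (e xs) == c).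
  exact: computable_eqn htag (computable_const _ c).
have hcoord f : computable k f -> forall j, computable_term k (fun xs => TVar (coord_var (f xs) j)).
  by move=> hf j; apply/computable_TVar/computable_coord_var.
rewrite /code_block.
apply: computable_prefix_if (htest 1) _ _.
  by apply: (@computable_coord_eqs _ _ (fun _ _ => TZero)) => // j; apply: computable_term_const.
apply: computable_prefix_if (htest 2) _ _.
  by apply: (@computable_coord_eqs _ _ (fun j _ => pow_coord_term 0 j)) => // j;
    apply: computable_term_const.
apply: computable_prefix_if (htest 3) _ _.
  apply: computable_prefix_if (computable_eqn hr (computable_const _ 0)) _ _.
    by apply: (@computable_coord_eqs _ _ (fun j _ => pow_coord_term 1 j)) => // j;
      apply: computable_term_const.
  apply: (@computable_coord_eqs _ _
    (fun j xs => if j == 0 then TCst (unpair2 (e xs)).-1 else TZero)) => // -[|j] /=.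
    exact: computable_TCst (computable_pred hr).
  exact: computable_term_const.
apply: computable_prefix_if (htest 4) _ _.
  apply: (@computable_coord_eqs _ _ (fun j xs =>
    TAdd (TVar (coord_var (unpair1 (unpair2 (e xs))) j))
         (TVar (coord_var (unpair2 (unpair2 (e xs))) j)))) => // j.
  exact: computable_TAdd (hcoord _ hs j) (hcoord _ hu j).
apply: computable_prefix_if (htest 5) _ _; last exact: computable_prefix_nil.
apply: (@computable_coord_eqs _ _
  (fun j xs => mul_coord_term (unpair1 (unpair2 (e xs))) (unpair2 (unpair2 (e xs))) j)) => // j.
apply: computable_term_foldr (computable_term_const _ _) => a t ht.
apply: computable_term_foldr ht => b t' ht'.
apply: computable_TAdd ht'; apply: computable_TMul (computable_term_const _ _).
exact: computable_TMul (hcoord _ hs a) (hcoord _ hu b).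
Qed.

Lemma computable_high_coords_zero k e :
  computable k e -> computable_prefix k (fun xs => high_coords_zero (e xs)).
Proof.
move=> he; apply: computable_prefix_map => j.
exact: computable_BEq (computable_TVar (computable_coord_var _ he)) (computable_term_const _ _).
Qed.

Lemma computable_atom_block k x :
  computable k x -> computable_prefix k (fun xs => atom_block (x xs)).
Proof.
move=> hx; have htag := computable_unpair1 hx; have hr := computable_unpair2 hx.
have hi := computable_unpair1 hr; have hL := computable_unpair2 hr.
have hfalse : computable_prefix k (fun _ => [:: BEq TOne TZero]).
  by move=> a ha; apply: computable_lcons (computable_const _ _) ha.
rewrite /atom_block.
apply: computable_prefix_if (computable_eqn htag (computable_const _ 0)) _ _.
  apply: computable_prefix_map => j.
  by apply: computable_BEq; apply/computable_TVar/computable_coord_var.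
apply: computable_prefix_if (computable_eqn htag (computable_const _ 1)) _ _;
  last exact: computable_prefix_nil.
apply: computable_prefix_if (computable_eqn hi (computable_const _ 0)) _ _.
  apply: computable_prefix_if _ (computable_high_coords_zero (computable_lhead hL)) hfalse.
  have hL0 := computable_eqn hL (computable_const _ 0).
  have hT0 := computable_eqn (computable_ltail hL) (computable_const _ 0).
  have := computable_if hL0 (computable_const _ 0) hT0.
  by apply: computable_ext => xs _; case: (_ == 0).
apply: computable_prefix_cons.
  apply: computable_BRel (computable_pred hi) (computable_enc_seq_map _ hL).
  exact: computable_TVar (computable_coord_var _ (computable_nth _ 0)).
exact: computable_prefix_flatten (computable_high_coords_zero (computable_nth _ 0)) hL.
Qed.

Lemma translation_code_computable d : computable1 (translation_code d).
Proof.
have hblocks : computable1 (blocks_code d).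
  apply: (@computable1_rec _ d (fun e acc => foldr lcons acc (map enc_basic (code_block e)))) => //.
  exact: computable_code_block (computable_nth 2 0) _ (computable_nth _ 1).
apply: (computable_foldr (h := fun x acc => foldr lcons acc (map enc_basic (atom_block x)))).
- exact: computable_atom_block (computable_nth 2 0) _ (computable_nth _ 1).
- exact: computable_nth.
- exact: hblocks.
Qed.

Lemma translate_recf defs :
  exists r, forall phi, evalr r [:: enc_conj phi] (enc_conj (translate defs phi)).
Proof.
have [r hr] := translation_code_computable (enc_conj defs).
by exists r => phi; rewrite -translation_codeE; apply: (hr [:: enc_conj phi]).
Qed.

End Translation.

(** * Semantics of the translation *)

Lemma In_cat (T : Type) (x : T) s1 s2 :
  List.In x (s1 ++ s2) <-> List.In x s1 \/ List.In x s2.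
Proof. exact: List.in_app_iff. Qed.

Lemma In_flatten (T : Type) (x : T) ss :
  List.In x (flatten ss) <-> exists s, List.In s ss /\ List.In x s.
Proof. exact: List.in_concat. Qed.

Lemma In_map (T U : Type) (f : T -> U) y s :
  List.In y (map f s) <-> exists x, List.In x s /\ y = f x.
Proof.
split=> [/List.in_map_iff [x [<- hx]]|[x [hx ->]]]; first by exists x.
by apply/List.in_map_iff; exists x.
Qed.

Lemma In_iota j a k : List.In j (iota a k) <-> a <= j < a + k.
Proof. by rewrite -[iota a k]/(List.seq a k) List.in_seq; split; lia. Qed.

Lemma eq_map_In (T U : Type) (f g : T -> U) s :
  (forall x, List.In x s -> f x = g x) -> map f s = map g s.
Proof. by elim: s => [|x s IHs] //= efg; rewrite efg ?IHs //; [move=> y hy; apply: efg|]; auto. Qed.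

Lemma teval_rename (S : Struc) (w : nat -> car S) f t :
  teval w (rename_term f t) = teval (fun m => w (f m)) t.
Proof. by elim: t => //= [s IHs u IHu|s IHs u IHu]; rewrite IHs IHu. Qed.

Lemma bholds_rename (S : Struc) (w : nat -> car S) f b :
  bholds w (rename_basic f b) <-> bholds (fun m => w (f m)) b.
Proof.
case: b => [s t|i ts] /=; first by rewrite !teval_rename.
by rewrite -map_comp (eq_map (teval_rename w f)).
Qed.

Lemma eq_bholds (S : Struc) (w1 w2 : nat -> car S) b :
  w1 =1 w2 -> bholds w1 b <-> bholds w2 b.
Proof.
have eq_teval t : w1 =1 w2 -> teval w1 t = teval w2 t.
  by move=> ew; elim: t => //= [s IHs u IHu|s IHs u IHu]; rewrite ?ew ?IHs ?IHu.
move=> ew; case: b => [s t|i ts] /=; first by rewrite !eq_teval.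
by rewrite (eq_map (eq_teval^~ ew)).
Qed.

Lemma ltn_unpair2 e : unpair1 e != 0 -> unpair2 e < e.
Proof. by move=> h; rewrite -{2}(npair_unpair e); apply: ltn_npair; rewrite lt0n. Qed.

Lemma ltn_enc_subterms tag s u :
  0 < tag -> (s < npair tag (npair s u)) && (u < npair tag (npair s u)).
Proof.
move=> tag_gt0; have := ltn_npair (npair s u) tag_gt0.
by case/andP: (leq_npair s u) => h1 h2 h3; apply/andP; split; lia.
Qed.

Lemma ltn_enc_basic phi b : List.In b phi -> enc_basic b < enc_conj phi.
Proof. by move=> hb; rewrite enc_conjE; apply: ltn_enc_seq; apply/In_map; exists b. Qed.

Lemma ltn_enc_arg i ts t : List.In t ts -> enc_term t < enc_basic (BRel i ts).
Proof.
move=> ht; rewrite /= enc_termsE.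
have /ltn_enc_seq : List.In (enc_term t) (map enc_term ts) by apply/In_map; exists t.
case/andP: (leq_npair i (enc_seq (map enc_term ts))) => _ h1.
by case/andP: (leq_npair 1 (npair i (enc_seq (map enc_term ts)))) => _ h2; lia.
Qed.

Fixpoint dec_term_fuel (fuel e : nat) : term :=
  if fuel is fuel'.+1 then
    match unpair1 e with
    | 0 => TVar (unpair2 e)
    | 2 => TOne
    | 3 => TCst (unpair2 e)
    | 4 => TAdd (dec_term_fuel fuel' (unpair1 (unpair2 e)))
                (dec_term_fuel fuel' (unpair2 (unpair2 e)))
    | 5 => TMul (dec_term_fuel fuel' (unpair1 (unpair2 e)))
                (dec_term_fuel fuel' (unpair2 (unpair2 e)))
    | _ => TZero
    end
  else TZero.

Definition dec_term (e : nat) : term := dec_term_fuel e.+1 e.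

Lemma dec_term_fuel_enough fuel fuel' e :
  e < fuel -> e < fuel' -> dec_term_fuel fuel e = dec_term_fuel fuel' e.
Proof.
elim: fuel fuel' e => [|fuel IHfuel] [|fuel'] e //= h h'.
have := @ltn_unpair2 e; have := leq_unpair1 (unpair2 e); have := leq_unpair2 (unpair2 e).
by case: (unpair1 e) => [|[|[|[|[|[|t]]]]]] //= h1 h2 /(_ isT) h3; f_equal; apply: IHfuel; lia.
Qed.

Lemma dec_termE e : dec_term e =
  match unpair1 e with
  | 0 => TVar (unpair2 e)
  | 2 => TOne
  | 3 => TCst (unpair2 e)
  | 4 => TAdd (dec_term (unpair1 (unpair2 e))) (dec_term (unpair2 (unpair2 e)))
  | 5 => TMul (dec_term (unpair1 (unpair2 e))) (dec_term (unpair2 (unpair2 e)))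
  | _ => TZero
  end.
Proof.
rewrite {1}/dec_term [LHS]/=.
have := @ltn_unpair2 e; have := leq_unpair1 (unpair2 e); have := leq_unpair2 (unpair2 e).
by case: (unpair1 e) => [|[|[|[|[|[|t]]]]]] // h1 h2 /(_ isT) h3; f_equal;
  apply: dec_term_fuel_enough; lia.
Qed.

Lemma enc_termK : cancel enc_term dec_term.
Proof.
elim=> [k| | |i|s IHs u IHu|s IHs u IHu]; rewrite dec_termE /=;
  by rewrite ?unpair1_npair ?unpair2_npair ?unpair1_npair ?IHs ?IHu.
Qed.

Lemma size_map_poly_le (aR rR : nzSemiRingType) (f : aR -> rR) (q : {poly aR}) :
  (size (map_poly f q) <= size q)%N.
Proof. exact: size_poly. Qed.

Section Coordinates.
Local Open Scope ring_scope.

Variables (R : idomainType) (F : fieldType) (io : {rmorphism R -> F}).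
Variables (alpha : F) (p : {poly R}) (n : nat).
Hypothesis size_p : size p = n.+2.
Hypothesis p_monic : p \is monic.
Hypothesis p_root : root (map_poly io p) alpha.
Hypothesis p_min : forall q : {poly R}, q != 0 -> root (map_poly io q) alpha ->
  (size p <= size q)%N.

Local Notation deg := n.+1.

Definition ncoef (j : nat) : R := - p`_j.

Definition of_coords (c : nat -> R) : F := \sum_(j < deg) io (c j) * alpha ^+ j.

Fixpoint pow_coord (m j : nat) : R :=
  if m is m'.+1 then (if j is j'.+1 then pow_coord m' j' else 0) + pow_coord m' n * ncoef j
  else if j == 0 then 1 else 0.

Definition mul_coords (c d : nat -> R) (j : nat) : R :=
  \sum_(a < deg) \sum_(b < deg) c a * d b * pow_coord (a + b) j.

Lemma eq_of_coords c d :
  (forall j, (j < deg)%N -> c j = d j) -> of_coords c = of_coords d.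
Proof. by move=> ecd; apply: eq_bigr => j _; rewrite ecd. Qed.

Lemma of_coordsD c d : of_coords c + of_coords d = of_coords (fun j => c j + d j).
Proof. by rewrite /of_coords -big_split; apply: eq_bigr => j _; rewrite rmorphD mulrDl. Qed.

Lemma of_coordsZ r c : io r * of_coords c = of_coords (fun j => r * c j).
Proof. by rewrite /of_coords mulr_sumr; apply: eq_bigr => j _; rewrite rmorphM mulrA. Qed.

Lemma of_coords_sum (I : Type) (s : seq I) (c : I -> nat -> R) :
  \sum_(i <- s) of_coords (c i) = of_coords (fun j => \sum_(i <- s) c i j).
Proof. by rewrite /of_coords exchange_big; apply: eq_bigr => j _; rewrite rmorph_sum mulr_suml. Qed.

Lemma of_coords_const r : of_coords (fun j => if j == 0%N then r else 0) = io r.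
Proof.
rewrite /of_coords big_ord_recl /= expr0 mulr1 big1 ?addr0 // => j _.
by rewrite rmorph0 mul0r.
Qed.

Lemma of_coords0 : of_coords (fun _ => 0) = 0.
Proof. by rewrite /of_coords big1 // => j _; rewrite rmorph0 mul0r. Qed.

Lemma alpha_exp_deg : alpha ^+ deg = of_coords ncoef.
Proof.
move: p_root; rewrite /root (horner_coef_wide _ (n := deg.+1)); last first.
  by rewrite -size_p size_map_poly_le.
rewrite big_ord_recr /= coef_map_id0 ?rmorph0 //.
have -> : p`_deg = 1 by move/monicP: p_monic; rewrite /lead_coef size_p.
rewrite rmorph1 mul1r addrC addr_eq0 => /eqP ->.
rewrite /of_coords -sumrN; apply: eq_bigr => j _.
by rewrite coef_map_id0 ?rmorph0 // /ncoef rmorphN mulNr.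
Qed.

Lemma alpha_expE m : alpha ^+ m = of_coords (pow_coord m).
Proof.
elim: m => [|m IHm]; first by rewrite expr0 of_coords_const rmorph1.
rewrite exprSr IHm /of_coords mulr_suml big_ord_recr /=.
under eq_bigr do rewrite -mulrA -exprSr.
rewrite -/(of_coords _) (eq_bigr (fun j : 'I_deg => io ((if (j : nat) is j'.+1
  then pow_coord m j' else 0) * 1 + pow_coord m n * ncoef j) * alpha ^+ j)); last first.
  by move=> j _; rewrite mulr1.
rewrite -/(of_coords (fun j => (if j is j'.+1 then pow_coord m j' else 0) * 1
  + pow_coord m n * ncoef j)).
rewrite -of_coordsD -of_coordsZ -alpha_exp_deg -mulrA -exprSr.
rewrite /of_coords big_ord_recl /= mul0r rmorph0 mul0r add0r.
by congr (_ + _); apply: eq_bigr => j _; rewrite mulr1.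
Qed.

Lemma of_coords_inj c d :
  of_coords c = of_coords d -> forall j, (j < deg)%N -> c j = d j.
Proof.
move=> ecd j lt_j; set P := \poly_(j < deg) (c j - d j).
have rootP : root (map_poly io P) alpha.
  rewrite /root (horner_coef_wide _ (n := deg)); last first.
    exact: leq_trans (size_map_poly_le _ _) (size_poly _ _).
  apply/eqP; transitivity (of_coords c - of_coords d); last by rewrite ecd subrr.
  rewrite /of_coords -sumrB; apply: eq_bigr => i _.
  by rewrite coef_map_id0 ?rmorph0 // coef_poly ltn_ord rmorphB mulrBl.
have [P0|P_neq0] := eqVneq P 0.
  have /eqP := congr1 (fun P : {poly R} => P`_j) P0.
  by rewrite coef_poly lt_j coef0 subr_eq0 => /eqP.
have := p_min P_neq0 rootP; have := size_poly deg (fun j => c j - d j).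
by rewrite -/P size_p; lia.
Qed.

Lemma of_coordsM c d : of_coords c * of_coords d = of_coords (mul_coords c d).
Proof.
rewrite {1 2}/of_coords big_distrlr /=.
transitivity (\sum_(a < deg) \sum_(b < deg) of_coords (fun j => c a * d b * pow_coord (a + b) j)).
  apply: eq_bigr => a _; apply: eq_bigr => b _.
  by rewrite mulrACA -exprD alpha_expE -rmorphM of_coordsZ.
by rewrite /mul_coords; under eq_bigr do rewrite of_coords_sum; rewrite of_coords_sum.
Qed.

Lemma inRalphaP x : inRalpha io alpha x <-> exists c, x = of_coords c.
Proof.
split=> [[q ->]|[c ->]].
  rewrite (horner_coef_wide _ (size_map_poly_le _ q)).
  exists (fun j => \sum_(m < size q) q`_m * pow_coord m j).
  rewrite -of_coords_sum; apply: eq_bigr => m _.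
  by rewrite coef_map_id0 ?rmorph0 // alpha_expE of_coordsZ.
exists (\poly_(j < deg) c j).
rewrite (horner_coef_wide _ (n := deg)); last first.
  exact: leq_trans (size_map_poly_le _ _) (size_poly _ _).
by apply: eq_bigr => j _; rewrite coef_map_id0 ?rmorph0 // coef_poly ltn_ord.
Qed.

Variables (cst : nat -> R) (rel : nat -> seq R -> Prop).
Local Notation SR := (StrucR cst rel).
Local Notation SA := (StrucRalpha io alpha cst rel).

Lemma teval_pow_coord_term (w : nat -> R) :
  (forall i, (i < deg)%N -> w (coef_var i) = ncoef i) ->
  forall m j, (j < deg)%N -> teval (S := SR) w (pow_coord_term deg m j) = pow_coord m j.
Proof.
move=> w_coef; elim=> [|m IHm] j lt_j /=; first by case: (j == 0%N).
rewrite w_coef // IHm //; congr (_ + _).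
by case: j lt_j => [|j] lt_j //=; rewrite IHm // ltnW.
Qed.

Lemma teval_mul_coord_term (w : nat -> R) :
  (forall i, (i < deg)%N -> w (coef_var i) = ncoef i) ->
  forall s u j, (j < deg)%N -> teval (S := SR) w (mul_coord_term deg s u j) =
    mul_coords (fun a => w (coord_var deg s a)) (fun b => w (coord_var deg u b)) j.
Proof.
move=> w_coef s u j lt_j.
have teval_sum (X : nat -> term) t0 l : teval (S := SR) w (foldr (fun b acc => TAdd (X b) acc) t0 l)
    = \sum_(b <- l) teval (S := SR) w (X b) + teval (S := SR) w t0.
  by elim: l => [|b l IHl] /=; rewrite ?big_nil ?add0r // big_cons IHl addrA.
have sum_iota (G : nat -> R) : \sum_(a <- iota 0 deg) G a = \sum_(a < deg) G a.
  by rewrite -(big_mkord xpredT) /index_iota subn0.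
have teval_sum2 (Y : nat -> nat -> term) l2 t0 l : teval (S := SR) w
    (foldr (fun a acc => foldr (fun b acc' => TAdd (Y a b) acc') acc l2) t0 l)
    = \sum_(a <- l) \sum_(b <- l2) teval (S := SR) w (Y a b) + teval (S := SR) w t0.
  elim: l => [|a l IHl]; first by rewrite big_nil add0r.
  by rewrite big_cons -addrA -IHl -teval_sum.
rewrite /mul_coord_term /mul_coords teval_sum2 [teval _ TZero]/= addr0 sum_iota.
apply: eq_bigr => a _; rewrite sum_iota; apply: eq_bigr => b _ /=.
by rewrite teval_pow_coord_term.
Qed.

Lemma In_blocks_below defs c b : List.In b (blocks_below deg defs c) <->
  List.In b defs \/ exists2 e, (e < c)%N & List.In b (code_block deg e).
Proof.
elim: c => [|c IHc] /=; first by split=> [|[//|[]]]; [left|].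
rewrite In_cat IHc; split=> [[hb|[hb|[e lt_e hb]]]|[hb|[e]]].
- by right; exists c.
- by left.
- by right; exists e => //; apply: leqW.
- by right; left.
- rewrite ltnS leq_eqVlt => /orP[/eqP -> hb|lt_e hb]; first by left.
  by right; right; exists e.
Qed.

Lemma In_coef_defs phiD b : List.In b (coef_defs deg phiD) <->
  exists2 i, (i < deg)%N & List.In b (coef_def phiD i).
Proof.
rewrite /coef_defs In_flatten; split=> [[bs [/In_map [i [/In_iota lt_i ->]] hb]]|[i lt_i hb]].
  by exists i.
by exists (coef_def phiD i); split=> //; apply/In_map; exists i; split=> //; apply/In_iota.
Qed.

Lemma In_coord_eqs e f b : List.In b (coord_eqs deg e f) <->
  exists j, (j < deg)%N /\ b = BEq (TVar (coord_var deg e j)) (f j).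
Proof.
rewrite /coord_eqs In_map.
by split=> -[j [hj ->]]; exists j; split=> //; move: hj; rewrite In_iota.
Qed.

Lemma In_high_coords_zero e b : List.In b (high_coords_zero deg e) <->
  exists j, (0 < j < deg)%N /\ b = BEq (TVar (coord_var deg e j)) TZero.
Proof.
rewrite /high_coords_zero In_map.
by split=> -[j [hj ->]]; exists j; split=> //; move: hj; rewrite In_iota; lia.
Qed.

Section Soundness.
Variables (phiD : nat -> conj_formula) (phi : conj_formula) (w : nat -> R).
Hypothesis phiD_sound : forall i (v : nat -> R), holds (S := SR) v (phiD i) -> v 0%N = p`_i.
Hypothesis w_sol : holds (S := SR) w (translate deg (coef_defs deg phiD) phi).

Local Notation c := (enc_conj phi).

Lemma w_block e b : (e < c)%N -> List.In b (code_block deg e) -> bholds (S := SR) w b.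
Proof.
move=> lt_e hb; apply: w_sol; apply/In_cat; right.
by apply/In_blocks_below; right; exists e.
Qed.

Lemma w_atom_block b b' :
  List.In b phi -> List.In b' (atom_block deg (enc_basic b)) -> bholds (S := SR) w b'.
Proof.
move=> hb hb'; apply: w_sol; apply/In_cat; left; apply/In_flatten.
by exists (atom_block deg (enc_basic b)); split=> //; apply/In_map; exists b.
Qed.

Lemma w_coef_var i : (i < deg)%N -> w (coef_var i) = ncoef i.
Proof.
move=> lt_i; have w_def b : List.In b (coef_def phiD i) -> bholds (S := SR) w b.
  move=> hb; apply: w_sol; apply/In_cat; right.
  by apply/In_blocks_below; left; apply/In_coef_defs; exists i.
have /phiD_sound w_def0 : holds (S := SR) (fun m => w (def_var i m)) (phiD i).
  by move=> b hb; apply/bholds_rename/w_def; right; apply/In_map; exists b.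
rewrite /ncoef -w_def0; apply/eqP; rewrite -addr_eq0; apply/eqP; apply: (w_def _ (or_introl erefl)).
Qed.

Definition coord_value (e : nat) : F := of_coords (fun j => w (coord_var deg e j)).

Definition sound_assignment (k : nat) : F := coord_value (enc_term (TVar k)).

Lemma coord_value_block e f : (e < c)%N -> code_block deg e = coord_eqs deg e f ->
  coord_value e = of_coords (fun j => teval (S := SR) w (f j)).
Proof.
move=> lt_e eblock; apply: eq_of_coords => j lt_j.
apply: (w_block (b := BEq (TVar (coord_var deg e j)) (f j)) lt_e).
by rewrite eblock; apply/In_coord_eqs; exists j.
Qed.

Lemma coord_value_term t :
  (enc_term t < c)%N -> coord_value (enc_term t) = teval (S := SA) sound_assignment t.
Proof.
have of_pow m : of_coords (fun j => teval (S := SR) w (pow_coord_term deg m j)) = alpha ^+ m.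
  rewrite alpha_expE; apply: eq_of_coords => j lt_j.
  by rewrite teval_pow_coord_term //; apply: w_coef_var.
elim: t => [k| | |[|i]|s IHs u IHu|s IHs u IHu] lt_t //.
- by rewrite (coord_value_block lt_t (code_block_TZero _)) of_coords0.
- by rewrite (coord_value_block lt_t (code_block_TOne _)) of_pow.
- by rewrite (coord_value_block lt_t (code_block_alpha _)) of_pow.
- rewrite (coord_value_block lt_t (code_block_TCst _ _)) -[RHS]/(io (cst i)) -of_coords_const.
  by apply: eq_of_coords => -[|j].
- case/andP: (ltn_enc_subterms (enc_term s) (enc_term u) (isT : 0 < 4)%N) => lt_s lt_u.
  rewrite (coord_value_block lt_t (code_block_TAdd _ _ _)) /= -IHs -?IHu ?of_coordsD //;
    exact: ltn_trans lt_t.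
- case/andP: (ltn_enc_subterms (enc_term s) (enc_term u) (isT : 0 < 5)%N) => lt_s lt_u.
  rewrite (coord_value_block lt_t (code_block_TMul _ _ _)) [teval _ (TMul _ _)]/= -IHs -?IHu;
    try exact: ltn_trans lt_t.
  rewrite of_coordsM; apply: eq_of_coords => j lt_j.
  by rewrite teval_mul_coord_term //; apply: w_coef_var.
Qed.

Lemma coord_value_high_zero e : (e < c)%N ->
  (forall b, List.In b (high_coords_zero deg e) -> bholds (S := SR) w b) ->
  coord_value e = io (w (coord_var deg e 0)).
Proof.
move=> lt_e w_zero; rewrite -of_coords_const; apply: eq_of_coords => -[|j] lt_j //=.
apply: (w_zero (BEq (TVar (coord_var deg e j.+1)) TZero)).
by apply/In_high_coords_zero; exists j.+1.
Qed.

Lemma sound_assignment_atom b : List.In b phi -> bholds (S := SA) sound_assignment b.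
Proof.
move=> hb; have lt_b := ltn_enc_basic hb; have w_b := w_atom_block hb.
case: b hb lt_b w_b => [s t|[|i] ts] hb lt_b w_b.
- have {}lt_b : (npair 0 (npair (enc_term s) (enc_term t)) < c)%N := lt_b.
  case/andP: (leq_npair (enc_term s) (enc_term t)) => le_s le_t.
  case/andP: (leq_npair 0 (npair (enc_term s) (enc_term t))) => _ le_st.
  rewrite /= -!coord_value_term; try lia.
  apply: eq_of_coords => j lt_j.
  apply: (w_b (BEq (TVar (coord_var deg (enc_term s) j)) (TVar (coord_var deg (enc_term t) j)))).
  rewrite atom_block_BEq.
  by apply/In_map; exists j; split=> //; apply/In_iota.
- have lt_ts t : List.In t ts -> (enc_term t < c)%N.
    by move=> ht; apply: ltn_trans lt_b; apply: ltn_enc_arg.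
  rewrite atom_block_InR in w_b.
  case: ts hb lt_b w_b lt_ts => [|t [|t' ts]] hb lt_b w_b lt_ts;
    try by have /eqP := w_b _ (or_introl erefl); rewrite oner_eq0.
  exists (w (coord_var deg (enc_term t) 0)) => /=.
  rewrite -coord_value_term ?lt_ts //=; last by left.
  by rewrite (coord_value_high_zero (lt_ts t (or_introl erefl))).
- have lt_ts t : List.In t ts -> (enc_term t < c)%N.
    by move=> ht; apply: ltn_trans lt_b; apply: ltn_enc_arg.
  rewrite atom_block_rel in w_b.
  exists [seq w (coord_var deg (enc_term t) 0) | t <- ts]; split.
    by have := w_b _ (or_introl erefl); rewrite /= -map_comp.
  rewrite /= -map_comp; apply: eq_map_In => t ht /=.
  rewrite -coord_value_term ?lt_ts //; apply: coord_value_high_zero (lt_ts _ ht) _ => b' hb'.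
  apply: w_b; right; apply/In_flatten; exists (high_coords_zero deg (enc_term t)).
  by split=> //; apply/In_map; exists t.
Qed.

End Soundness.

Section Completeness.
Variables (phiD : nat -> conj_formula) (vD : nat -> nat -> R) (coords : F -> nat -> R).
Variables (phi : conj_formula) (v : nat -> F).
Hypothesis vD_def : forall i, vD i 0%N = p`_i /\ holds (S := SR) (vD i) (phiD i).
Hypothesis coordsP : forall x c, x = of_coords c -> x = of_coords (coords x).
Hypothesis v_dom : forall k, inRalpha io alpha (v k).
Hypothesis v_sol : holds (S := SA) v phi.

Definition term_value (e : nat) : F := teval (S := SA) v (dec_term e).

(* Inverts the variable layout of [coord_var], [coef_var] and [def_var]. *)
Definition complete_assignment (x : nat) : R :=
  let y := x./2 in
  if odd x then (if unpair2 y == 0%N then ncoef (unpair1 y) else vD (unpair1 y) (unpair2 y).-1)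
  else coords (term_value (y %/ deg)) (y %% deg).

Local Notation wC := complete_assignment.

Lemma complete_coord_var e j : (j < deg)%N -> wC (coord_var deg e j) = coords (term_value e) j.
Proof.
move=> lt_j; rewrite /wC /coord_var mul2n odd_double doubleK.
by rewrite divnMDl // divn_small // addn0 modnMDl modn_small.
Qed.

Lemma odd_half_double_succ y : odd (2 * y).+1 /\ ((2 * y).+1)./2 = y.
Proof. by rewrite mul2n /= odd_double uphalf_double. Qed.

Lemma complete_coef_var i : wC (coef_var i) = ncoef i.
Proof.
rewrite /wC /coef_var; case: (odd_half_double_succ (npair i 0)) => -> ->.
by rewrite unpair2_npair unpair1_npair.
Qed.

Lemma complete_def_var i m : wC (def_var i m) = vD i m.
Proof.
rewrite /wC /def_var; case: (odd_half_double_succ (npair i m.+1)) => -> ->.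
by rewrite unpair2_npair unpair1_npair.
Qed.

Lemma teval_of_coords t : exists c, teval (S := SA) v t = of_coords c.
Proof.
elim: t => [k| | |[|i]|s [c1 h1] u [c2 h2]|s [c1 h1] u [c2 h2]].
- exact/inRalphaP/v_dom.
- by exists (fun _ => 0); rewrite of_coords0.
- by exists (pow_coord 0); rewrite -alpha_expE expr0.
- by exists (pow_coord 1); rewrite -alpha_expE expr1.
- by exists (fun j => if j == 0%N then cst i else 0); rewrite of_coords_const.
- by exists (fun j => c1 j + c2 j); rewrite -of_coordsD /= h1 h2.
- by exists (mul_coords c1 c2); rewrite -of_coordsM /= h1 h2.
Qed.

Lemma coordsE x c : x = of_coords c -> forall j, (j < deg)%N -> coords x j = c j.
Proof. by move=> hx; apply: of_coords_inj; rewrite -(coordsP hx) -hx. Qed.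

Lemma term_valueE e : term_value e = of_coords (coords (term_value e)).
Proof. by have [c hc] := teval_of_coords (dec_term e); apply: coordsP hc. Qed.

Lemma coords_io r j : (j < deg)%N -> coords (io r) j = if j == 0%N then r else 0.
Proof. by move=> lt_j; rewrite (coordsE (esym (of_coords_const r))). Qed.

Lemma complete_coord_eqs e f :
  term_value e = of_coords (fun j => teval (S := SR) wC (f j)) ->
  forall b, List.In b (coord_eqs deg e f) -> bholds (S := SR) wC b.
Proof.
move=> he b /In_coord_eqs [j [lt_j ->]] /=.
by rewrite complete_coord_var // (coordsE he).
Qed.

Lemma complete_code_block e b : List.In b (code_block deg e) -> bholds (S := SR) wC b.
Proof.
have of_pow m : of_coords (fun j => teval (S := SR) wC (pow_coord_term deg m j)) = alpha ^+ m.
  rewrite alpha_expE; apply: eq_of_coords => j lt_j.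
  by rewrite teval_pow_coord_term // => i _; apply: complete_coef_var.
have of_var (e' : nat) : of_coords (fun j => teval (S := SR) wC (TVar (coord_var deg e' j)))
    = term_value e'.
  by rewrite [RHS]term_valueE; apply: eq_of_coords => j lt_j /=; rewrite complete_coord_var.
have := dec_termE e; rewrite /code_block.
case: (unpair1 e) => [|[|[|[|[|[|tag]]]]]] he; try by case.
- by apply: complete_coord_eqs; rewrite /term_value he of_coords0.
- by apply: complete_coord_eqs; rewrite /term_value he of_pow expr0.
- case: (unpair2 e) he => [|r] he; apply: complete_coord_eqs; rewrite /term_value he.
    by rewrite of_pow expr1.
  by rewrite /= -of_coords_const; apply: eq_of_coords => -[|j].
- apply: complete_coord_eqs; rewrite /term_value he /= -/(term_value _) -/(term_value _).
  by rewrite -!of_var of_coordsD.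
- apply: complete_coord_eqs.
  rewrite /term_value he [teval _ (TMul _ _)]/= -/(term_value _) -/(term_value _).
  rewrite -!of_var of_coordsM; apply: eq_of_coords => j lt_j.
  by rewrite teval_mul_coord_term // => i _; apply: complete_coef_var.
Qed.

Lemma complete_coef_def i b : List.In b (coef_def phiD i) -> bholds (S := SR) wC b.
Proof.
case=> [<-|/In_map [b' [hb' ->]]].
  by rewrite /= complete_coef_var complete_def_var (vD_def i).1 /ncoef addNr.
apply/bholds_rename/(@eq_bholds SR (fun m => wC (def_var i m)) (vD i) b' (complete_def_var i)).
exact: (vD_def i).2 b' hb'.
Qed.

Lemma complete_atom_block b b' :
  List.In b phi -> List.In b' (atom_block deg (enc_basic b)) -> bholds (S := SR) wC b'.
Proof.
move=> /v_sol; case: b => [s t|[|i] ts] v_b.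
- rewrite atom_block_BEq => /In_map [j [/In_iota lt_j ->]].
  by rewrite /= !complete_coord_var // /term_value !enc_termK v_b.
- rewrite atom_block_InR; case: v_b => r /=; case: ts => [|t [|t' ts]] // -[v_t].
  move=> /In_high_coords_zero [j [/andP[j_gt0 lt_j] ->]].
  by rewrite /= complete_coord_var // /term_value enc_termK v_t coords_io //; case: j j_gt0 lt_j.
- case: v_b => rs [rel_rs v_ts]; rewrite atom_block_rel => -[<-|].
    rewrite /= -!map_comp; suff -> : [seq wC (coord_var deg (enc_term t) 0) | t <- ts] = rs by [].
    transitivity [seq coords x 0 | x <- [seq teval (S := SA) v t | t <- ts]].
      rewrite -map_comp; apply: eq_map => t /=.
      by rewrite complete_coord_var // /term_value enc_termK.
    by rewrite v_ts -map_comp -[RHS]map_id; apply: eq_map => r /=; rewrite coords_io.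
  move=> /In_flatten [bs [/In_map [t [ht ->]]]].
  move=> /In_high_coords_zero [j [/andP[j_gt0 lt_j] ->]].
  have /In_map [r [_ v_t]] : List.In (teval (S := SA) v t) (map io rs).
    by rewrite -v_ts; apply/In_map; exists t.
  by rewrite /= complete_coord_var // /term_value enc_termK v_t coords_io //; case: j j_gt0 lt_j.
Qed.

Lemma complete_translate : holds (S := SR) wC (translate deg (coef_defs deg phiD) phi).
Proof.
move=> b /In_cat [/In_flatten [bs [/In_map [b0 [hb0 ->]] hb]]|/In_blocks_below].
  exact: complete_atom_block hb0 hb.
by case=> [/In_coef_defs [i _]|[e _]]; [apply: complete_coef_def | apply: complete_code_block].
Qed.

End Completeness.

Lemma solvable_translate phiD :
  (forall i z, (exists v : nat -> R, v 0%N = z /\ holds (S := SR) v (phiD i)) <-> z = p`_i) ->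
  forall phi, solvable SA phi <-> solvable SR (translate deg (coef_defs deg phiD) phi).
Proof.
move=> phiD_def phi; split=> [[v [v_dom v_sol]]|[w [_ w_sol]]].
  have [vD vD_def] := choice _ (fun i => (phiD_def i p`_i).2 erefl).
  have [coords coordsP] : exists coords : F -> nat -> R,
      forall x c, x = of_coords c -> x = of_coords (coords x).
    apply: (choice (fun x d => forall c, x = of_coords c -> x = of_coords d)) => x.
    have [[c hc]|none] := classic (exists c, x = of_coords c); first by exists c.
    by exists (fun _ => 0) => c hc; case: none; exists c.
  by exists (complete_assignment vD coords v); split=> //; apply: complete_translate.
have phiD_sound i (u : nat -> R) : holds (S := SR) u (phiD i) -> u 0%N = p`_i.
  by move=> hu; apply/(phiD_def i); exists u.
exists (sound_assignment w); split=> [k|b hb]; first by apply/inRalphaP; eexists.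
exact: sound_assignment_atom phiD_sound w_sol b hb.
Qed.

End Coordinates.

Lemma size_monic_root_gt1 (R S : nzRingType) (f : {rmorphism R -> S}) (p : {poly R}) x :
  p \is monic -> root (map_poly f p) x -> (1 < size p)%N.
Proof.
move=> p_monic p_root.
have size_fp : size (map_poly f p) = size p.
  by rewrite size_map_poly_id0 // (monicP p_monic) rmorph1 oner_neq0.
rewrite -size_fp; apply: root_size_gt1 p_root.
by rewrite -size_poly_eq0 size_fp size_poly_eq0 monic_neq0.
Qed.

Lemma diophantine_singletonP (R : idomainType) (cst : nat -> R) rel (x : R) :
  @diophantine_singleton (StrucR cst rel) x -> exists phi, forall z,
    (exists v : nat -> R, v 0%N = z /\ holds (S := StrucR cst rel) v phi) <-> z = x.
Proof.
case=> phi hphi; exists phi => z; rewrite -(hphi z I).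
by split=> [[v hv]|[v [_ hv]]]; exists v.
Qed.

Unset Implicit Arguments.

Theorem mainTheorem19
  (R : idomainType) (cst : nat -> R) (rel : nat -> seq R -> Prop)
  (F : fieldType) (iota : {rmorphism R -> F}) (iota_inj : injective iota)
  (alpha : F) (p : {poly R})
  (p_monic : p \is monic)
  (p_root : root (map_poly iota p) alpha)
  (p_min : forall q : {poly R}, q != 0%R -> root (map_poly iota q) alpha ->
             (size p <= size q)%N)
  (p_coef : forall i : nat, @diophantine_singleton (StrucR cst rel) (p`_i)%R)
  (H10R : H10_positive (StrucR cst rel)) :
  H10_positive (StrucRalpha iota alpha cst rel).
Proof.
have [n size_p] : exists n, size p = n.+2.
  by case: (size p) (size_monic_root_gt1 p_monic p_root) => [|[|n]] // _; exists n.
have [phiD phiD_def] := choice _ (fun i => diophantine_singletonP (p_coef i)).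
apply: (H10_positive_reduction (T := translate n.+1 (coef_defs n.+1 phiD))) H10R.
  exact: translate_recf.
exact: (solvable_translate size_p p_monic p_root p_min phiD_def).
Qed.
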